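(* Let $A,B,C$ be rooted trees, let $f\colon B\to A$ be a light confluent epimorphism and $g\colon C\to A$ a confluent epimorphism. Let $D$ be the graph with $V(D)=\{(b,c)\in V(B)\times V(C): f(b)=g(c)\}$ and $\langle (b,c),(b',c')\rangle\in E(D)$ iff $\langle b,b'\rangle\in E(B)$ and $\langle c,c'\rangle\in E(C)$, with root $(r_B,r_C)$, and let $f_0(b,c)=b$, $g_0(b,c)=c$. Then $D$ is a rooted tree, $f_0\colon D\to B$ is a confluent epimorphism and $g_0\colon D\to C$ is a light confluent epimorphism (of rooted trees), and $f\circ f_0=g\circ g_0$. Moreover, if $g$ is light then so is $f_0$, and if both $f$ and $g$ are end vertex preserving then so are $f_0$ and $g_0$.
   Context: A graph is a pair $(V,E)$ with $E\subseteq V^2$ reflexive and symmetric. A tree is a finite graph in which any two distinct vertices are joined by a unique sequence of pairwise distinct vertices with consecutive ones adjacent. A rooted tree is a tree $T$ with a distinguished vertex $r_T$ (the root); $x\le_T y$ means the path from $r_T$ to $y$ contains $x$. An epimorphism between rooted trees is a map on vertices sending edges to edges, surjective on vertices and on edges, sending root to root and order-preserving ($a\le b\Rightarrow f(a)\le f(b)$). A set $S$ of vertices is connected if it cannot be written as a union of two nonempty disjoint sets with no edge between them; components are maximal connected subsets. An epimorphism $f$ is confluent if for every connected $Q$ in the target and every component $K$ of $f^{-1}(Q)$, $f(K)=Q$; it is light if no two distinct vertices with the same image are joined by an edge. An end vertex of a rooted tree is a non-root vertex of order $1$ (order = number of non-degenerate edges containing it); an epimorphism is end vertex preserving if it maps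 end vertices to end vertices. *)

From mathcomp Require Import all_boot.
Set Implicit Arguments. Unset Strict Implicit. Unset Printing Implicit Defensive.

Definition is_graph (T : finType) (E : rel T) : Prop :=
  reflexive E /\ symmetric E.

Definition arc (T : finType) (E : rel T) (x y : T) (q : seq T) : bool :=
  [&& path E x q, last x q == y & uniq (x :: q)].

Definition is_tree (T : finType) (E : rel T) : Prop :=
  is_graph E /\
  forall x y : T, x != y -> exists! q : seq T, arc E x y q.

Definition tree_le (T : finType) (E : rel T) (r x y : T) : Prop :=
  exists q : seq T, arc E r y q /\ x \in r :: q.

Definition epimorphism (T1 T2 : finType) (E1 : rel T1) (r1 : T1)
    (E2 : rel T2) (r2 : T2) (f : T1 -> T2) : Prop :=
  [/\ (forall a b, E1 a b -> E2 (f a) (f b)),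
      (forall c, exists a, f a = c),
      (forall c d, E2 c d -> exists a b, [/\ E1 a b, f a = c & f b = d]),
      f r1 = r2 &
      (forall a b, tree_le E1 r1 a b -> tree_le E2 r2 (f a) (f b))].

Definition connected_set (T : finType) (E : rel T) (S : {set T}) : Prop :=
  ~ exists P Q : {set T},
      [/\ P :|: Q = S, P != set0, Q != set0, [disjoint P & Q] &
          forall p q, p \in P -> q \in Q -> ~~ E p q].

Definition component (T : finType) (E : rel T) (S K : {set T}) : Prop :=
  [/\ K \subset S, connected_set E K &
      forall K' : {set T}, K \subset K' -> K' \subset S ->
        connected_set E K' -> K' = K].

Definition confluent (T1 T2 : finType) (E1 : rel T1) (E2 : rel T2)
    (f : T1 -> T2) : Prop :=
  forall Q : {set T2}, connected_set E2 Q ->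
    forall K : {set T1}, component E1 (f @^-1: Q) K -> f @: K = Q.

Definition light (T1 T2 : finType) (E1 : rel T1) (f : T1 -> T2) : Prop :=
  forall a b : T1, a != b -> f a = f b -> ~~ E1 a b.

Definition order (T : finType) (E : rel T) (x : T) : nat :=
  #|[set y | (y != x) && E x y]|.

Definition end_vertex (T : finType) (E : rel T) (r x : T) : Prop :=
  x != r /\ order E x = 1.

Definition end_vertex_preserving (T1 T2 : finType) (E1 : rel T1) (r1 : T1)
    (E2 : rel T2) (r2 : T2) (f : T1 -> T2) : Prop :=
  forall x, end_vertex E1 r1 x -> end_vertex E2 r2 (f x).

From Pilot Require Import Defs.
From mathcomp Require Import all_boot.
Set Implicit Arguments. Unset Strict Implicit. Unset Printing Implicit Defensive.

(* Every rooted tree carries a parent map p (p r = r, and every non-degenerate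
   edge joins a vertex to its parent) together with a depth that p decreases;
   conversely such a structure makes the graph a tree whose order x <= y means
   that x is an iterated parent of y.  Since f is light, f (pB b) = pA (f b) for
   b <> rB, so the parent of (b, c) in D can be taken to be (b, pC c) or
   (pB b, pC c) according as g (pC c) = g c or not; with the depth of c this is
   a parent structure on D, and f0, g0 send parents to parents or to
   themselves, hence preserve the order.  Confluence is used in its local form:
   an onto map is confluent iff every edge at phi x lifts to an edge leaving the
   fibre component of x.  Fibre components of a light map are points, so the
   edges at f b lift to edges at b; this gives the lifts for g0 and, combined
   with the lifts for g, those for f0. *)

Lemma connect_forward_closed (T : finType) (e : rel T) (P : T -> Prop) x y :
  (forall u v, e u v -> P u -> P v) -> connect e x y -> P x -> P y.
Proof.
move=> closedP /connectP[s]; elim: s x => [|z s IH] x /=; first by move=> _ ->.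
by case/andP=> exz pth ly Px; apply: IH pth ly (closedP _ _ exz Px).
Qed.

Section Arcs.
Variables (T : finType) (E : rel T).

Lemma arc_last x y q : Defs.arc E x y q -> last x q = y.
Proof. by case/and3P=> _ /eqP. Qed.

Lemma arc_nil x q : Defs.arc E x x q -> q = [::].
Proof.
case: q => // a q /and3P[_ /eqP lx /andP[+ _]].
by rewrite -{1}lx /= mem_last.
Qed.

Lemma arc_behead x y z q : Defs.arc E x y (z :: q) -> Defs.arc E z y q.
Proof. by case/and3P=> /andP[_ pth] lst /andP[_ u]; apply/and3P. Qed.

Lemma arc_catr x y q1 q2 : Defs.arc E x y (q1 ++ q2) -> Defs.arc E (last x q1) y q2.
Proof.
rewrite /Defs.arc cat_path last_cat -cat_cons cat_uniq.
case/and3P=> /andP[_ p2] l2 /and3P[_ disj u2].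
rewrite p2 l2 /= u2 andbT.
by apply: contra disj => lq2; apply/hasP; exists (last x q1); rewrite ?mem_last.
Qed.

Lemma arc_rev x y q : symmetric E -> Defs.arc E x y q -> Defs.arc E y x (rev (belast x q)).
Proof.
move=> sym /and3P[pth /eqP <- uq]; apply/and3P; split.
- by rewrite rev_path; apply: sub_path pth => a b; rewrite sym.
- by case: q {pth uq} => [|a q] /=; rewrite ?rev_cons ?last_rcons.
- by rewrite -rev_rcons rev_uniq -lastI.
Qed.

End Arcs.

Section ParentStructure.
Variables (T : finType) (E : rel T) (r : T) (p : T -> T) (h : T -> nat).

Definition parent_structure := [/\ is_graph E, p r = r,
  (forall x, x != r -> h (p x) < h x), (forall x, E x (p x)) &
  (forall x y, E x y -> x != y -> y = p x \/ x = p y)].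

Hypothesis ps : parent_structure.

Lemma ps_sym : symmetric E. Proof. by case: ps => [[]]. Qed.
Lemma parent_root : p r = r. Proof. by case: ps. Qed.
Lemma ltn_parent x : x != r -> h (p x) < h x. Proof. by case: ps => _ _ + _ _; apply. Qed.
Lemma edge_parent x : E x (p x). Proof. by case: ps. Qed.
Lemma edge_parentP x y : E x y -> x != y -> y = p x \/ x = p y.
Proof. by case: ps => _ _ _ _; apply. Qed.

Lemma parent_neq x : x != r -> p x != x.
Proof. by move/ltn_parent; apply: contraTneq => ->; rewrite ltnn. Qed.

Lemma leq_parent x : h (p x) <= h x.
Proof. by have [->|/ltn_parent/ltnW //] := eqVneq x r; rewrite parent_root. Qed.

Lemma leq_iter_parent k x : h (iter k p x) <= h x.
Proof. by elim: k => //= k IH; apply: leq_trans (leq_parent _) IH. Qed.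

Lemma iter_parent_root k : iter k p r = r.
Proof. by elim: k => //= k ->; rewrite parent_root. Qed.

Lemma parent_parent_eq x y : p x = y -> p y = x -> x = y.
Proof.
move=> pxy pyx; have [xr|xr] := eqVneq x r; first by rewrite -pxy xr parent_root.
have [yr|yr] := eqVneq y r; first by rewrite -pyx yr parent_root.
have := ltn_parent yr; have := ltn_parent xr; rewrite pxy pyx => hyx hxy.
by have := ltn_trans hyx hxy; rewrite ltnn.
Qed.

Lemma connect_root x : connect E x r.
Proof.
have [n] := ubnP (h x); elim: n x => // n IH x hx.
have [->|xr] := eqVneq x r; first exact: connect0.
apply: connect_trans (connect1 (edge_parent x)) (IH _ _).
exact: leq_trans (ltn_parent xr) hx.
Qed.

(* Once a uniq path steps down to a child, it can never come back up. *)
Lemma descending_path_ltn x q : path E x q -> uniq (x :: q) -> q != [::] ->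
  x = p (head x q) -> h x < h (last x q).
Proof.
elim: q x => // y q IH x /= /andP[Exy pq] /andP[xq uq] _ xpy.
have yr : y != r by apply: contraNneq xq => yr; rewrite xpy yr parent_root inE eqxx.
have hxy : h x < h y by rewrite xpy ltn_parent.
case: q IH pq uq xq => [|z q] IH //= /andP[Eyz pq] /andP[yzq uq] xq.
have yz : y != z by apply: contraNneq yzq => ->; exact: mem_head.
case: (edge_parentP Eyz yz) => [zpy|ypz].
  by move: xq; rewrite !inE zpy -xpy eqxx !orbT.
by apply: ltn_trans hxy (IH _ _ _ _ ypz) => //=; [rewrite Eyz pq | rewrite yzq uq].
Qed.

Lemma arc_ascends x y q : Defs.arc E x y q -> x != y -> h y <= h x ->
  exists q', q = p x :: q'.
Proof.
case: q => [|a q] axy xy hyx; first by rewrite -(arc_last axy) eqxx in xy.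
case/and3P: axy => /= /andP[Exa pq] /eqP lq uq.
have xa : x != a by case/andP: uq => + _; apply: contraNneq => ->; exact: mem_head.
case: (edge_parentP Exa xa) => [->|xpa]; first by exists q.
have := @descending_path_ltn x (a :: q); rewrite /= Exa pq lq uq -xpa ltnNge hyx.
by move=> /(_ isT isT isT erefl).
Qed.

Lemma ps_arc_unique x y q1 q2 : Defs.arc E x y q1 -> Defs.arc E x y q2 -> q1 = q2.
Proof.
have [n] := ubnP (h x + h y); elim: n x y q1 q2 => // n IH x y q1 q2 hn a1 a2.
have [xy|xy] := eqVneq x y; first by subst y; rewrite (arc_nil a1) (arc_nil a2).
wlog hyx : x y q1 q2 hn a1 a2 xy / h y <= h x.
  move=> W; have [|/ltnW hxy] := leqP (h y) (h x); first exact: W.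
  have /(can_inj (@revK _)) eqb : rev (belast x q1) = rev (belast x q2).
    have := W y x _ _ _ (arc_rev ps_sym a1) (arc_rev ps_sym a2).
    by rewrite addnC eq_sym => /(_ hn xy hxy).
  have : x :: q1 = x :: q2 by rewrite !lastI eqb (arc_last a1) (arc_last a2).
  by case.
have [q1' eq1] := arc_ascends a1 xy hyx; have [q2' eq2] := arc_ascends a2 xy hyx.
subst q1 q2; congr cons.
have xr : x != r.
  by apply: contraTneq a1 => ->; rewrite /Defs.arc parent_root /= inE eqxx !andbF.
apply: IH (arc_behead a1) (arc_behead a2); rewrite ltnS in hn.
by apply: leq_trans hn; rewrite ltn_add2r ltn_parent.
Qed.

Lemma parent_structure_tree : is_tree E.
Proof.
split; first by case: ps.
move=> x y _; have /connectP[q pq ly] : connect E x y.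
  by apply: connect_trans (connect_root x) _; rewrite (sym_connect_sym ps_sym) connect_root.
case: (shortenP pq) ly => q' pq' uq' _ ly.
have aq' : Defs.arc E x y q' by rewrite /Defs.arc pq' -ly eqxx uq'.
by exists q'; split=> // q2; apply: ps_arc_unique.
Qed.

Lemma arc_root_ancestors y : exists q, Defs.arc E r y q /\
  forall x, x \in r :: q <-> exists k, iter k p y = x.
Proof.
have [n] := ubnP (h y); elim: n y => // n IH y hy.
have [->|yr] := eqVneq y r.
  exists [::]; split; first by rewrite /Defs.arc /= eqxx.
  move=> x; rewrite inE; split; first by move/eqP->; exists 0.
  by case=> k <-; rewrite iter_parent_root.
have [q [/and3P[pq /eqP lq uq] anc]] := IH (p y) (leq_trans (ltn_parent yr) hy).
have yq : y \notin r :: q.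
  apply/negP => /anc[k hk].
  have := leq_iter_parent k (p y); rewrite hk => hyp.
  by have := leq_ltn_trans hyp (ltn_parent yr); rewrite ltnn.
exists (rcons q y); split.
  rewrite /Defs.arc rcons_path pq lq last_rcons eqxx -rcons_cons rcons_uniq yq uq.
  by rewrite ps_sym edge_parent.
move=> x; rewrite -rcons_cons mem_rcons inE; split.
  case/orP=> [/eqP->|/anc [k hk]]; first by exists 0.
  by exists k.+1; rewrite iterSr.
case=> [[|k]] /= hk; first by rewrite hk eqxx.
by apply/orP; right; apply/anc; exists k; rewrite -iterSr.
Qed.

Lemma tree_leP x y : tree_le E r x y <-> exists k, iter k p y = x.
Proof.
have [q [aq anc]] := arc_root_ancestors y.
split; last by move/anc => xq; exists q.
by case=> q' [aq' xq']; apply/anc; rewrite (ps_arc_unique aq aq').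
Qed.

Lemma ancestor_adjacent k x y : iter k p y = x -> E x y -> x = y \/ x = p y.
Proof.
move=> hk Exy; have [->|xy] := eqVneq x y; first by left.
case: (edge_parentP Exy xy) => [ypx|]; last by right.
have [xr|xr] := eqVneq x r; first by left; rewrite ypx xr parent_root.
have yr : y != r by apply: contraNneq xr => yr; rewrite -hk yr iter_parent_root.
case: k hk => [/= yx|k hk]; first by rewrite yx eqxx in xy.
have := leq_ltn_trans (leq_iter_parent k (p y)) (ltn_parent yr).
by rewrite -iterSr hk ltnNge ypx ltnW ?ltn_parent.
Qed.

Lemma end_vertexP x :
  end_vertex E r x <-> x != r /\ (forall y, E x y -> y != x -> y = p x).
Proof.
rewrite /end_vertex /order.
have px z : z != r -> p z \in [set y | (y != z) && E z y].
  by move=> zr; rewrite inE parent_neq ?edge_parent.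
split=> [[xr /eqP/cards1P[z hz]]|[xr nbr]]; split=> //.
  move=> y Exy yx; have := px x xr; rewrite hz inE => /eqP ->.
  have : y \in [set y | (y != x) && E x y] by rewrite inE yx Exy.
  by rewrite hz inE => /eqP.
apply/eqP/cards1P; exists (p x); apply/setP => y; rewrite !inE.
apply/idP/eqP => [/andP[yx Exy]|->]; first exact: nbr.
by rewrite parent_neq ?edge_parent.
Qed.

End ParentStructure.

Section TreeParent.
Variables (T : finType) (E : rel T) (r : T).
Hypothesis tree : is_tree E.

Lemma tree_refl : reflexive E. Proof. by case: tree => [[]]. Qed.
Lemma tree_sym : symmetric E. Proof. by case: tree => [[]]. Qed.

Lemma tree_arc_unique x y q1 q2 : Defs.arc E x y q1 -> Defs.arc E x y q2 -> q1 = q2.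
Proof.
have [<- /arc_nil -> /arc_nil -> //|xy] := eqVneq x y.
by case: tree => _ /(_ x y xy) [q [_ uq]] /uq <- /uq.
Qed.

Lemma exists_root_arc y : exists q, Defs.arc E r y q.
Proof.
have [<-|ry] := eqVneq r y; first by exists [::]; rewrite /Defs.arc /= eqxx.
by case: tree => _ /(_ r y ry) [q []]; exists q.
Qed.

Definition root_arc y := xchoose (exists_root_arc y).
Definition tree_parent y := last r (belast r (root_arc y)).
Definition tree_depth y := size (root_arc y).

Lemma root_arcP y : Defs.arc E r y (root_arc y). Proof. exact: xchooseP. Qed.

Lemma root_arcE y q : Defs.arc E r y q -> root_arc y = q.
Proof. exact: tree_arc_unique (root_arcP y). Qed.

Lemma tree_parent_rcons y q : root_arc y = rcons q y -> tree_parent y = last r q.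
Proof. by rewrite /tree_parent => ->; rewrite belast_rcons. Qed.

Lemma root_arc_parent y : y != r -> root_arc y = rcons (root_arc (tree_parent y)) y.
Proof.
move=> yr; have := root_arcP y; rewrite /tree_parent.
case/lastP: (root_arc y) => [/and3P[_ /= /eqP ry _]|q z]; first by rewrite ry eqxx in yr.
rewrite belast_rcons /= => /and3P[+ /eqP + +]; rewrite last_rcons => + zy; subst z.
rewrite rcons_path -rcons_cons rcons_uniq => /andP[pq _] /andP[_ uq].
by rewrite (@root_arcE (last r q) q) // /Defs.arc pq eqxx.
Qed.

Lemma tree_edge_parent x y : E x y -> x != y -> y = tree_parent x \/ x = tree_parent y.
Proof.
move=> Exy xy; have /and3P[px /eqP lx ux] := root_arcP x.
have [yx|yx] := boolP (y \in r :: root_arc x); [left|right].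
  have [q1 [q2 [ly eqx]]] : exists q1 q2, last r q1 = y /\ root_arc x = q1 ++ q2.
    by case/splitPl: yx => q1 q2 ly; exists q1, q2.
  have a2 : Defs.arc E y x q2 by rewrite -ly; apply: arc_catr; rewrite -eqx root_arcP.
  have a1 : Defs.arc E y x [:: x] by rewrite /Defs.arc /= tree_sym Exy eqxx inE eq_sym xy.
  by rewrite (@tree_parent_rcons x q1) // eqx (tree_arc_unique a2 a1) cats1.
have ay : Defs.arc E r y (rcons (root_arc x) y).
  by rewrite /Defs.arc rcons_path px lx Exy last_rcons eqxx -rcons_cons rcons_uniq yx.
by rewrite (tree_parent_rcons (root_arcE ay)) lx.
Qed.

Lemma tree_parent_structure : parent_structure E r tree_parent tree_depth.
Proof.
split; first by case: tree.
- by rewrite /tree_parent (@root_arcE r [::]) // /Defs.arc /= eqxx.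
- by move=> x /root_arc_parent eqx; rewrite /tree_depth eqx size_rcons.
- move=> x; have [->|/root_arc_parent eqx] := eqVneq x r.
    by rewrite /tree_parent (@root_arcE r [::]) ?tree_refl // /Defs.arc /= eqxx.
  have := root_arcP x; rewrite eqx => /and3P[+ _ _].
  by rewrite rcons_path (arc_last (root_arcP _)) tree_sym => /andP[].
- exact: tree_edge_parent.
Qed.

End TreeParent.

Section Connectivity.
Variables (T : finType) (E : rel T).

Definition induced (S : {set T}) : rel T := [rel u v | [&& E u v, u \in S & v \in S]].
Definition component_of (S : {set T}) x := [set y | connect (induced S) x y].

Lemma connect_induced_mem (S : {set T}) u v : connect (induced S) u v -> u \in S -> v \in S.
Proof. by apply: (connect_forward_closed (P := fun w => w \in S)) => ? ? /and3P[]. Qed.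

Lemma connect_induced_sub (S S' : {set T}) u v :
  S \subset S' -> connect (induced S) u v -> connect (induced S') u v.
Proof.
move=> /subsetP sub; apply: connect_sub => a b /and3P[Eab aS bS].
by apply: connect1; rewrite /induced /= Eab !sub.
Qed.

Lemma path_exit (P S : {set T}) u s : path (induced S) u s -> u \in P -> last u s \notin P ->
  exists y z, [/\ connect (induced P) u y, z \in S, z \notin P & E y z].
Proof.
elim: s u => [|v s IH] u /=; first by move=> _ ->.
case/andP=> /and3P[Euv uS vS] pth uP; have [vP|vP _] := boolP (v \in P).
  move=> /(IH v pth vP)[y [z [Cy zS zP Eyz]]]; exists y, z; split=> //.
  by apply: connect_trans (connect1 _) Cy; rewrite /induced /= Euv uP vP.
by exists u, v; rewrite connect0.
Qed.

Lemma connected_setP (S : {set T}) :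
  connected_set E S <-> {in S &, forall x y, connect (induced S) x y}.
Proof.
split=> [connS x y xS yS|connS [P [Q [U nP nQ disj noE]]]].
  apply/idPn => nxy; apply: connS.
  exists (S :&: component_of S x), (S :\: component_of S x); split.
  - exact: setID.
  - by apply/set0Pn; exists x; rewrite !inE xS connect0.
  - by apply/set0Pn; exists y; rewrite !inE yS nxy.
  - by rewrite -setI_eq0 setDE setIACA setICr setI0.
  move=> a b; rewrite !inE => /andP[aS xa] /andP[/negP xb bS]; apply/negP => Eab.
  by apply: xb; apply: connect_trans xa (connect1 _); rewrite /induced /= Eab aS bS.
case/set0Pn: nP => x xP; case/set0Pn: nQ => y yQ.
have xS : x \in S by rewrite -U inE xP.
have yS : y \in S by rewrite -U inE yQ orbT.
have yP : y \notin P by apply/negP => yP; rewrite (disjointFr disj yP) in yQ.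
case/connectP: (connS x y xS yS) => s pth ly.
have lP : last x s \notin P by rewrite -ly.
have [a [b [Cxa bS bP Eab]]] := path_exit pth xP lP.
have bQ : b \in Q by move: bS; rewrite -U inE (negbTE bP).
by have := noE a b (connect_induced_mem Cxa xP) bQ; rewrite Eab.
Qed.

Lemma component_neq0 (S K : {set T}) : component E S K -> S != set0 -> K != set0.
Proof.
case=> sub _ maxK /set0Pn[s sS]; apply/negP => /eqP K0.
have : [set s] = K.
  apply: maxK; rewrite ?K0 ?sub0set ?sub1set //.
  by apply/connected_setP => a b; rewrite !inE => /eqP-> /eqP->; apply: connect0.
by rewrite K0 => /setP/(_ s); rewrite !inE eqxx.
Qed.

Hypothesis sym : symmetric E.

Lemma induced_sym (S : {set T}) : symmetric (induced S).
Proof. by move=> a b; rewrite /induced /= sym (andbC (a \in S)). Qed.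

Lemma path_component_of (S : {set T}) x u s : path (induced S) u s ->
  u \in component_of S x -> path (induced (component_of S x)) u s.
Proof.
elim: s u => //= v s IH u /andP[/and3P[Euv uS vS] pth] xu.
have xv : v \in component_of S x.
  move: xu; rewrite !inE => /connect_trans; apply; apply: connect1.
  by rewrite /induced /= Euv uS vS.
by rewrite /induced /= Euv xu xv IH.
Qed.

Lemma component_of_connected (S : {set T}) x : connected_set E (component_of S x).
Proof.
have xC y : y \in component_of S x -> connect (induced (component_of S x)) x y.
  rewrite inE => /connectP[s pth ->]; apply/connectP; exists s => //.
  by apply: path_component_of pth _; rewrite inE connect0.
apply/connected_setP => y z /xC xy /xC xz; apply: connect_trans xz.
by rewrite (sym_connect_sym (induced_sym _)).
Qed.

Lemma component_component_of (S : {set T}) x : x \in S -> component E S (component_of S x).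
Proof.
move=> xS; split; last 1 first.
- move=> K' sub sub' /connected_setP connK'; apply/eqP; rewrite eqEsubset sub andbT.
  apply/subsetP => y yK; rewrite inE; apply: connect_induced_sub sub' _; apply: connK' => //.
  by apply: (subsetP sub); rewrite inE connect0.
- by apply/subsetP => y; rewrite inE => /connect_induced_mem; apply.
- exact: component_of_connected.
Qed.

Lemma component_eq_of (S K : {set T}) x : component E S K -> x \in K -> K = component_of S x.
Proof.
case=> sub /connected_setP connK maxK xK; apply/esym/maxK.
- by apply/subsetP => y yK; rewrite inE (connect_induced_sub sub) ?connK.
- by case: (component_component_of (subsetP sub x xK)).
- exact: component_of_connected.
Qed.

End Connectivity.

Section Confluence.
Variables (T1 T2 : finType) (E1 : rel T1) (E2 : rel T2) (phi : T1 -> T2).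

Definition edge_lifting := forall x a, E2 (phi x) a -> exists y z,
  [/\ connect (induced E1 (phi @^-1: [set phi x])) x y, E1 y z & phi z = a].

Lemma component_image_closed (Q : {set T2}) (K : {set T1}) y c :
  symmetric E1 -> edge_lifting -> component E1 (phi @^-1: Q) K ->
  y \in K -> c \in Q -> E2 (phi y) c -> c \in phi @: K.
Proof.
move=> sym lift compK yK cQ /lift[y' [z [Cyy' Ey'z zc]]].
have yQ : phi y \in Q by case: compK => /subsetP/(_ y yK); rewrite inE.
have sub : phi @^-1: [set phi y] \subset phi @^-1: Q.
  by apply/subsetP => w; rewrite !inE => /eqP ->.
have y'Q : y' \in phi @^-1: Q.
  by apply: (subsetP sub); apply: connect_induced_mem Cyy' _; rewrite !inE.
rewrite -zc; apply: imset_f; rewrite (component_eq_of sym compK yK) inE.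
apply: connect_trans (connect_induced_sub sub Cyy') (connect1 _).
by rewrite /induced /= Ey'z y'Q inE zc cQ.
Qed.

Lemma edge_lifting_confluent : symmetric E1 -> (forall a, exists x, phi x = a) ->
  edge_lifting -> confluent E1 E2 phi.
Proof.
move=> sym surj lift Q /connected_setP connQ K compK.
have KQ : phi @: K \subset Q.
  by case: compK => /subsetP sub _ _; apply/subsetP => _ /imsetP[y /sub + ->]; rewrite inE.
apply/eqP; rewrite eqEsubset KQ; apply/subsetP => c cQ.
have [k kK] : exists k, k \in K.
  apply/set0Pn; apply: component_neq0 compK _; have [x xc] := surj c.
  by apply/set0Pn; exists x; rewrite inE xc.
have kQ : phi k \in Q by apply: (subsetP KQ); apply: imset_f.
apply: (connect_forward_closed (P := fun u => u \in phi @: K)) (connQ _ _ kQ cQ) _.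
  move=> u v /and3P[Euv _ vQ] /imsetP[y yK uy]; rewrite uy in Euv.
  exact: component_image_closed compK yK vQ Euv.
exact: imset_f.
Qed.

Lemma confluent_edge_lifting : reflexive E1 -> symmetric E1 -> symmetric E2 ->
  confluent E1 E2 phi -> edge_lifting.
Proof.
move=> refl sym sym2 conf x a xa.
have [<-|xa'] := eqVneq (phi x) a; first by exists x, x; rewrite connect0 refl.
pose Q := [set phi x; a].
have connQ : connected_set E2 Q.
  have Exa : induced E2 Q (phi x) a by rewrite /induced /= xa !inE !eqxx orbT.
  have Eax : induced E2 Q a (phi x) by rewrite induced_sym.
  apply/connected_setP => u v; rewrite !inE => /orP[] /eqP-> /orP[] /eqP->;
    by [exact: connect0 | exact: connect1].
have xQ : x \in phi @^-1: Q by rewrite !inE eqxx.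
have : a \in phi @: component_of E1 (phi @^-1: Q) x.
  by rewrite (conf Q connQ _ (component_component_of sym xQ)) !inE eqxx orbT.
case/imsetP => z; rewrite inE => /connectP[s pth ->] az.
have xP : x \in phi @^-1: [set phi x] by rewrite !inE.
have lP : last x s \notin phi @^-1: [set phi x] by rewrite !inE -az eq_sym.
have [y [w [Cxy wQ wP Eyw]]] := path_exit pth xP lP.
exists y, w; split=> //; move: wQ wP; rewrite !inE.
by case/orP=> /eqP ->; rewrite ?eqxx.
Qed.

Lemma light_fiber_connect x y : light E1 phi ->
  connect (induced E1 (phi @^-1: [set phi x])) x y -> y = x.
Proof.
move=> lt Cxy; apply/eqP; apply: (connect_forward_closed (P := fun u => u == x)) Cxy (eqxx x).
move=> u v /and3P[Euv _]; rewrite !inE => /eqP fv /eqP ux; subst u.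
by apply: contraTT Euv => vx; apply: lt; rewrite // eq_sym.
Qed.

Lemma light_confluent_lift_edge x a : reflexive E1 -> symmetric E1 -> symmetric E2 ->
  light E1 phi -> confluent E1 E2 phi -> E2 (phi x) a -> exists y, E1 x y /\ phi y = a.
Proof.
move=> refl sym sym2 lt /(confluent_edge_lifting refl sym sym2) lift.
by case/lift=> y [z [/(light_fiber_connect lt) -> Exz za]]; exists z.
Qed.

End Confluence.

Section Epimorphism.
Variables (T1 T2 : finType) (E1 : rel T1) (r1 : T1) (E2 : rel T2) (r2 : T2).
Variable phi : T1 -> T2.
Hypothesis epi : epimorphism E1 r1 E2 r2 phi.

Lemma epi_edge x y : E1 x y -> E2 (phi x) (phi y).
Proof. by case: epi => + _ _ _ _; apply. Qed.
Lemma epi_surj a : exists x, phi x = a. Proof. by case: epi. Qed.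
Lemma epi_edge_surj a b : E2 a b -> exists x y, [/\ E1 x y, phi x = a & phi y = b].
Proof. by case: epi => _ _ + _ _; apply. Qed.
Lemma epi_root : phi r1 = r2. Proof. by case: epi. Qed.
Lemma epi_tree_le x y : tree_le E1 r1 x y -> tree_le E2 r2 (phi x) (phi y).
Proof. by case: epi => _ _ _ _; apply. Qed.

End Epimorphism.

Section ParentMaps.
Variables (T1 T2 : finType) (E1 : rel T1) (r1 : T1) (p1 : T1 -> T1) (h1 : T1 -> nat).
Variables (E2 : rel T2) (r2 : T2) (p2 : T2 -> T2) (h2 : T2 -> nat) (phi : T1 -> T2).
Hypotheses (ps1 : parent_structure E1 r1 p1 h1) (ps2 : parent_structure E2 r2 p2 h2).

Definition parent_hom := forall x, phi (p1 x) = phi x \/ phi (p1 x) = p2 (phi x).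

Lemma epi_parent_hom : epimorphism E1 r1 E2 r2 phi -> parent_hom.
Proof.
move=> epi x; have : tree_le E1 r1 (p1 x) x by apply/(tree_leP ps1); exists 1.
move/(epi_tree_le epi)/(tree_leP ps2) => [k /(ancestor_adjacent ps2)]; apply.
by apply: (epi_edge epi); rewrite (ps_sym ps1) (edge_parent ps1).
Qed.

Lemma parent_hom_tree_le : parent_hom ->
  forall x y, tree_le E1 r1 x y -> tree_le E2 r2 (phi x) (phi y).
Proof.
move=> hom x y /(tree_leP ps1) [k <-]; apply/(tree_leP ps2).
elim: k => [|k [j hj]]; first by exists 0.
by rewrite iterS; case: (hom (iter k p1 y)) => ->; [exists j | exists j.+1; rewrite iterS hj].
Qed.

Hypotheses (light_phi : light E1 phi) (hom : parent_hom).

Lemma light_map_parent x : x != r1 -> phi (p1 x) = p2 (phi x).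
Proof.
move=> xr; case: (hom x) => // eq_phi.
by have := light_phi (parent_neq ps1 xr) eq_phi; rewrite (ps_sym ps1) (edge_parent ps1).
Qed.

Lemma light_map_root x : phi x = r2 -> x = r1.
Proof.
move=> xr2; apply/eqP; apply: contraT => xr.
have := light_map_parent xr; rewrite xr2 (parent_root ps2) -xr2.
by move/(light_phi (parent_neq ps1 xr)); rewrite (ps_sym ps1) (edge_parent ps1).
Qed.

End ParentMaps.

Section FibreProduct.
Variables (A B C : finType) (EA : rel A) (rA : A) (EB : rel B) (rB : B).
Variables (EC : rel C) (rC : C) (f : B -> A) (g : C -> A).
Hypotheses (treeA : is_tree EA) (treeB : is_tree EB) (treeC : is_tree EC).
Hypotheses (epi_f : epimorphism EB rB EA rA f) (light_f : light EB f).
Hypotheses (conf_f : confluent EB EA f) (epi_g : epimorphism EC rC EA rA g).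

Local Notation pA := (tree_parent rA treeA).
Local Notation pB := (tree_parent rB treeB).
Local Notation pC := (tree_parent rC treeC).
Let psA := tree_parent_structure rA treeA.
Let psB := tree_parent_structure rB treeB.
Let psC := tree_parent_structure rC treeC.

Let g_parent : parent_hom pC pA g := epi_parent_hom psC psA epi_g.
Let f_parent : parent_hom pB pA f := epi_parent_hom psB psA epi_f.
Let f_light_parent : forall b, b != rB -> f (pB b) = pA (f b) :=
  light_map_parent psB light_f f_parent.
Let f_light_root : forall b, f b = rA -> b = rB := light_map_root psB psA light_f f_parent.

Let f_lift_edge b a : EA (f b) a -> exists b', EB b b' /\ f b' = a.
Proof.
apply: light_confluent_lift_edge light_f conf_f.
- exact: tree_refl treeB.
- exact: tree_sym treeB.
- exact: tree_sym treeA.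
Qed.

Definition D := {p : B * C | f p.1 == g p.2}.
Definition f0 (d : D) : B := (val d).1.
Definition g0 (d : D) : C := (val d).2.
Definition ED : rel D := fun d e => EB (f0 d) (f0 e) && EC (g0 d) (g0 e).

Definition mkD b c (e : f b = g c) : D :=
  exist (fun p : B * C => f p.1 == g p.2) (b, c) (introT eqP e).
Definition rD : D := mkD (etrans (epi_root epi_f) (esym (epi_root epi_g))).

Lemma D_square d : f (f0 d) = g (g0 d). Proof. exact/eqP/(valP d). Qed.

Lemma D_eq d e : f0 d = f0 e -> g0 d = g0 e -> d = e.
Proof. by move=> eb ec; apply: val_inj; apply: injective_projections eb ec. Qed.

Lemma ED_refl : reflexive ED.
Proof. by move=> d; rewrite /ED (tree_refl treeB) (tree_refl treeC). Qed.

Lemma ED_sym : symmetric ED.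
Proof. by move=> d e; rewrite /ED (tree_sym treeB) (tree_sym treeC). Qed.

Lemma g0_light : light ED g0.
Proof.
move=> d e de ce; apply/negP => /andP[Ebb _].
have bb : f0 d != f0 e by apply: contraNneq de => bb; apply/eqP/D_eq.
by have := light_f bb; rewrite !D_square ce Ebb => /(_ erefl).
Qed.

Lemma f0_light : light EC g -> light ED f0.
Proof.
move=> light_g d e de be; apply/negP => /andP[_ Ecc].
have cc : g0 d != g0 e by apply: contraNneq de => cc; apply/eqP/D_eq.
by have := light_g _ _ cc; rewrite -!D_square be Ecc => /(_ erefl).
Qed.

Lemma D_root d : g0 d = rC -> d = rD.
Proof.
move=> cr; apply: D_eq; last exact: cr.
by apply: f_light_root; rewrite D_square cr (epi_root epi_g).
Qed.

Definition parentD_fst (d : D) : B :=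
  if g (pC (g0 d)) == g (g0 d) then f0 d else pB (f0 d).

Lemma parentD_fstP d : f (parentD_fst d) = g (pC (g0 d)).
Proof.
rewrite /parentD_fst; case: eqP => [->|gpc]; first exact: D_square.
have gpcA : g (pC (g0 d)) = pA (g (g0 d)) by case: (g_parent (g0 d)) => // /gpc.
have br : f0 d != rB.
  by apply/eqP => br; apply: gpc; rewrite gpcA -D_square br (epi_root epi_f) (parent_root psA).
by rewrite f_light_parent // D_square gpcA.
Qed.

Definition parentD (d : D) : D := mkD (parentD_fstP d).
Definition depthD (d : D) : nat := tree_depth rC treeC (g0 d).

Lemma ED_parent d e : ED d e -> d != e -> g0 e = pC (g0 d) -> e = parentD d.
Proof.
case/andP=> Ebb _ de ce; apply: D_eq; last by rewrite ce.
have fe : f (f0 e) = g (pC (g0 d)) by rewrite D_square ce.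
change (f0 e = parentD_fst d); rewrite /parentD_fst; case: eqP => [gcc|gcc].
  apply/eqP; apply: contraTT Ebb => bb; apply: light_f; first by rewrite eq_sym.
  by rewrite D_square fe gcc.
have gpc : g (pC (g0 d)) = pA (g (g0 d)) by case: (g_parent (g0 d)) => // /gcc.
have bb : f0 d != f0 e by apply/eqP => bb; apply: gcc; rewrite -fe -bb D_square.
case: (edge_parentP psB Ebb bb) => // bpb.
have er : f0 e != rB by apply: contraNneq bb => er; rewrite bpb er (parent_root psB).
have fbb : f (f0 d) = f (f0 e).
  apply: (parent_parent_eq psA); first by rewrite fe gpc D_square.
  by rewrite -f_light_parent // -bpb.
by have := light_f bb fbb; rewrite Ebb.
Qed.

Lemma D_parent_structure : parent_structure ED rD parentD depthD.
Proof.
split.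
- by split; [exact: ED_refl | exact: ED_sym].
- apply: D_eq => /=; last exact: (parent_root psC).
  by change (parentD_fst rD = rB); rewrite /parentD_fst /g0 /= (parent_root psC) eqxx.
- by move=> d dr; apply: (ltn_parent psC); apply: contra_neq dr; apply: D_root.
- move=> d; change (EB (f0 d) (parentD_fst d) && EC (g0 d) (pC (g0 d))).
  rewrite (edge_parent psC) andbT /parentD_fst.
  by case: ifP => _; [exact: tree_refl | exact: (edge_parent psB)].
move=> d e Ede de; have ce : g0 d != g0 e by apply: contraTneq Ede; apply: g0_light.
have Ecc : EC (g0 d) (g0 e) by case/andP: Ede.
case: (edge_parentP psC Ecc ce) => [ec|dc]; [left | right]; apply: ED_parent => //.
- by rewrite ED_sym.
- by rewrite eq_sym.
Qed.

Lemma D_tree : is_tree ED. Proof. exact: parent_structure_tree D_parent_structure. Qed.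

Lemma f0_epi : epimorphism ED rD EB rB f0.
Proof.
split=> //.
- by move=> d e /andP[].
- by move=> b; have [c gc] := epi_surj epi_g (f b); exists (mkD (esym gc)).
- move=> b b' Ebb.
  have [c [c' [Ecc gc gc']]] := epi_edge_surj epi_g (epi_edge epi_f Ebb).
  by exists (mkD (esym gc)), (mkD (esym gc')); rewrite /ED /= Ebb Ecc.
apply: (parent_hom_tree_le D_parent_structure psB) => d.
change (parentD_fst d = f0 d \/ parentD_fst d = pB (f0 d)).
by rewrite /parentD_fst; case: ifP => _; [left | right].
Qed.

Lemma g0_epi : epimorphism ED rD EC rC g0.
Proof.
split=> //.
- by move=> d e /andP[].
- by move=> c; have [b fb] := epi_surj epi_f (g c); exists (mkD fb).
- move=> c c' Ecc; have [b fb] := epi_surj epi_f (g c).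
  have [b' [Ebb fb']] : exists b', EB b b' /\ f b' = g c'.
    by apply: f_lift_edge; rewrite fb (epi_edge epi_g Ecc).
  by exists (mkD fb), (mkD fb'); rewrite /ED /= Ebb Ecc.
by apply: (parent_hom_tree_le D_parent_structure psC) => d; right.
Qed.

Lemma f0_edge_lifting : confluent EC EA g -> edge_lifting ED EB f0.
Proof.
move=> conf_g d b' Ebb.
have Ea : EA (g (g0 d)) (f b') by rewrite -D_square (epi_edge epi_f Ebb).
have [y [z [Cy Eyz gz]]] :=
  confluent_edge_lifting (tree_refl treeC) (tree_sym treeC) (tree_sym treeA) conf_g Ea.
pose P u := exists2 e : D, g0 e = u /\ f0 e = f0 d &
  connect (induced ED (f0 @^-1: [set f0 d])) d e.
have [e [ey ed] Cde] : P y.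
  apply: (connect_forward_closed _ Cy); last by exists d.
  move=> u v /and3P[Euv _]; rewrite !inE => /eqP gv [e [eu ed] Cde].
  have fv : f (f0 d) = g v by rewrite D_square gv.
  exists (mkD fv) => //; apply: connect_trans Cde (connect1 _).
  by rewrite /induced /= /ED /= !inE ed eu Euv (tree_refl treeB) eqxx.
exists e, (mkD (esym gz)); split=> //.
by rewrite /ED /= ey ed Ebb Eyz.
Qed.

Lemma f0_confluent : confluent EC EA g -> confluent ED EB f0.
Proof.
move=> conf_g; apply: edge_lifting_confluent ED_sym _ (f0_edge_lifting conf_g).
exact: epi_surj f0_epi.
Qed.

Lemma g0_confluent : confluent ED EC g0.
Proof.
apply: edge_lifting_confluent ED_sym (epi_surj g0_epi) _ => d c' Ecc.
have [b' [Ebb fb']] : exists b', EB (f0 d) b' /\ f b' = g c'.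
  by apply: f_lift_edge; rewrite D_square (epi_edge epi_g Ecc).
by exists d, (mkD fb'); rewrite connect0 /ED /= Ebb Ecc.
Qed.

Lemma g0_end_vertex_preserving : end_vertex_preserving ED rD EC rC g0.
Proof.
move=> d /(end_vertexP D_parent_structure)[dr end_d]; apply/(end_vertexP psC); split.
  by apply: contra_neq dr; apply: D_root.
move=> c' Ecc cc.
have [b' [Ebb fb']] : exists b', EB (f0 d) b' /\ f b' = g c'.
  by apply: f_lift_edge; rewrite D_square (epi_edge epi_g Ecc).
have Ede : ED d (mkD fb') by rewrite /ED /= Ebb Ecc.
have ed : mkD fb' != d by apply: contra_neq cc => <-.
by rewrite -[c']/(g0 (mkD fb')) (end_d _ Ede ed).
Qed.

Lemma f0_end_vertex_preserving : end_vertex_preserving EC rC EA rA g ->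
  end_vertex_preserving ED rD EB rB f0.
Proof.
move=> evp_g d end_d; have := evp_g _ (g0_end_vertex_preserving end_d).
case/(end_vertexP psA) => gr end_gc; apply/(end_vertexP psB); split.
  by apply: contra_neq gr => br; rewrite -D_square br (epi_root epi_f).
move=> b' Ebb bb; have db : f0 d != b' by rewrite eq_sym.
have [//|bpb] := edge_parentP psB Ebb db.
have b'r : b' != rB by apply: contraNneq bb => b'r; rewrite bpb b'r (parent_root psB).
have fbb : f b' != f (f0 d).
  by apply/eqP => fe; have := light_f bb fe; rewrite (tree_sym treeB) Ebb.
have fb'p : f b' = pA (f (f0 d)).
  by rewrite D_square; apply: end_gc; rewrite -D_square ?(epi_edge epi_f Ebb).
have fbp : f (f0 d) = pA (f b') by rewrite bpb f_light_parent.
have := parent_parent_eq psA (esym fb'p) (esym fbp).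
by move/esym/eqP; rewrite (negbTE fbb).
Qed.

End FibreProduct.

Theorem theorem5p16
  (A B C : finType) (EA : rel A) (rA : A) (EB : rel B) (rB : B)
  (EC : rel C) (rC : C) (f : B -> A) (g : C -> A) :
  is_tree EA -> is_tree EB -> is_tree EC ->
  epimorphism EB rB EA rA f -> light EB f -> confluent EB EA f ->
  epimorphism EC rC EA rA g -> confluent EC EA g ->
  let D := {p : B * C | f p.1 == g p.2} in
  let ED : rel D := fun p q => EB (val p).1 (val q).1 && EC (val p).2 (val q).2 in
  let f0 : D -> B := fun p => (val p).1 in
  let g0 : D -> C := fun p => (val p).2 in
  exists rD : D,
    [/\ val rD = (rB, rC),
        is_tree ED,
        epimorphism ED rD EB rB f0 /\ confluent ED EB f0,
        [/\ epimorphism ED rD EC rC g0, light ED g0 & confluent ED EC g0] &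
        (forall d : D, f (f0 d) = g (g0 d))] /\
    (light EC g -> light ED f0) /\
        (end_vertex_preserving EB rB EA rA f ->
         end_vertex_preserving EC rC EA rA g ->
         end_vertex_preserving ED rD EB rB f0 /\
         end_vertex_preserving ED rD EC rC g0).
Proof.
move=> treeA treeB treeC epi_f light_f conf_f epi_g conf_g /=.
exists (rD epi_f epi_g); split; [split=> // | split].
- exact: D_tree treeA treeB treeC epi_f light_f epi_g.
- split; first exact: f0_epi treeA treeB treeC epi_f light_f epi_g.
  exact: f0_confluent treeA treeB treeC epi_f light_f epi_g conf_g.
- split; first exact: g0_epi treeA treeB treeC epi_f light_f conf_f epi_g.
    exact: g0_light.
  exact: g0_confluent treeA treeB treeC epi_f light_f conf_f epi_g.
- exact: D_square.
- exact: f0_light.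
move=> _ evp_g; split.
- exact: (f0_end_vertex_preserving treeA treeB treeC light_f conf_f evp_g).
- exact: (g0_end_vertex_preserving treeA treeB treeC light_f conf_f).
Qed.
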